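(* Let $K$ be a field of characteristic $p>0$ such that $K/k$ is a finitely generated field extension, where $k=\bigcap_{n\ge0}K^{p^n}$. Let $n$ be a positive integer. The map $W_\bullet\mapsto W_n$ is a bijection from the set of power towers on $K$ of length $n$ to the set of subfields of $K$ of exponent $n$.
   Context: A power tower on $K$ is a sequence of subfields $W_0,W_1,\ldots$ of $K$ with $W_j=W_i\cdot K^{p^j}$ whenever $j\le i$ ($\cdot$ = compositum in $K$). It has length $n$ if $n$ is the least integer with $W_N=W_n$ for all $N\ge n$. A subfield $W\subseteq K$ has exponent $n$ if $n$ is the least integer with $K^{p^n}\subseteq W$. *)

(* Subfields of an arbitrary (possibly infinite-dimensional)
   field K are represented as predicates K -> Prop closed under the field
   operations; equality of subfields is Leibniz equality of predicates. *)
From mathcomp Require Import all_boot all_order all_algebra.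
Set Implicit Arguments. Unset Strict Implicit. Unset Printing Implicit Defensive.
Import GRing.Theory.
Local Open Scope ring_scope.

Section PowerTowers.
Variable K : fieldType.

Definition is_subfield (W : K -> Prop) : Prop :=
  [/\ W 0, W 1,
      (forall x y, W x -> W y -> W (x - y)),
      (forall x y, W x -> W y -> W (x * y)) &
      (forall x, W x -> W x^-1)].

Definition frob_pow (p n : nat) : K -> Prop :=
  fun x => exists y : K, x = y ^+ (p ^ n).

Definition gen_subfield (A : K -> Prop) : K -> Prop :=
  fun x => forall W, is_subfield W -> (forall a, A a -> W a) -> W x.

Definition compositum (A B : K -> Prop) : K -> Prop :=
  gen_subfield (fun x => A x \/ B x).

Definition perfect_core (p : nat) : K -> Prop :=
  fun x => forall n, frob_pow p n x.

Definition fin_gen_over (k : K -> Prop) : Prop :=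
  exists s : seq K, forall x : K, gen_subfield (fun y => k y \/ y \in s) x.

Definition power_tower (p : nat) (W : nat -> K -> Prop) : Prop :=
  (forall i, is_subfield (W i)) /\
  (forall i j, (j <= i)%N -> W j = compositum (W i) (frob_pow p j)).

Definition stable_from (W : nat -> K -> Prop) (m : nat) : Prop :=
  forall N, (m <= N)%N -> W N = W m.

Definition tower_length (W : nat -> K -> Prop) (n : nat) : Prop :=
  stable_from W n /\ (forall m, stable_from W m -> (n <= m)%N).

Definition contains_frob (p : nat) (V : K -> Prop) (m : nat) : Prop :=
  forall x, frob_pow p m x -> V x.

Definition subfield_exponent (p : nat) (V : K -> Prop) (n : nat) : Prop :=
  contains_frob p V n /\ (forall m, contains_frob p V m -> (n <= m)%N).

End PowerTowers.

From mathcomp Require Import all_boot all_order all_algebra.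
From Stdlib Require Import FunctionalExtensionality PropExtensionality.
Set Implicit Arguments. Unset Strict Implicit. Unset Printing Implicit Defensive.
Import GRing.Theory.
Local Open Scope ring_scope.

(* Once a tower is stable from n, its axioms pin it down completely:
   W j = W n . K^(p^j) for every j (for j >= n because K^(p^j) is already
   inside W n). Hence a tower is the sequence j |-> V . K^(p^j) built from
   V = W n, and conversely this sequence is a tower, stable exactly from the
   exponent of V. *)

Section PowerTowerBijection.
Variables (K : fieldType) (p : nat).
Implicit Types (V F G : K -> Prop) (W : nat -> K -> Prop).

Lemma pred_ext (A B : K -> Prop) : (forall x, A x <-> B x) -> A = B.
Proof.
move=> AB; apply: functional_extensionality => x.
exact: propositional_extensionality.
Qed.

Lemma gen_subfield_is_subfield (A : K -> Prop) : is_subfield (gen_subfield A).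
Proof.
rewrite /gen_subfield; split=> [W [] // | W [] // | x y Ax Ay W subW |
  x y Ax Ay W subW | x Ax W subW]; case: (subW).
- by move=> _ _ subB _ _ AW; apply: subB; [apply: Ax | apply: Ay].
- by move=> _ _ _ mulC _ AW; apply: mulC; [apply: Ax | apply: Ay].
- by move=> _ _ _ _ invC AW; apply: invC; apply: Ax.
Qed.

Lemma gen_subfield_min (A : K -> Prop) V :
  is_subfield V -> (forall a, A a -> V a) -> forall x, gen_subfield A x -> V x.
Proof. by move=> subV AV x; apply. Qed.

Lemma compositum_subl F G x : F x -> compositum F G x.
Proof. by move=> Fx W _; apply; left. Qed.

Lemma compositum_subr F G x : G x -> compositum F G x.
Proof. by move=> Gx W _; apply; right. Qed.

Lemma compositum_min F G V : is_subfield V ->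
  (forall x, F x -> V x) -> (forall x, G x -> V x) ->
  forall x, compositum F G x -> V x.
Proof. by move=> subV FV GV; apply: gen_subfield_min => // a [/FV | /GV]. Qed.

Lemma compositum_sub_id V F : is_subfield V -> (forall x, F x -> V x) ->
  compositum V F = V.
Proof.
move=> subV FV; apply: pred_ext => x; split; last exact: compositum_subl.
exact: compositum_min.
Qed.

Lemma compositum_absorb V F G : (forall x, F x -> G x) ->
  compositum (compositum V F) G = compositum V G.
Proof.
move=> FG; apply: pred_ext => x; split; apply: compositum_min;
  do ?exact: gen_subfield_is_subfield.
- apply: compositum_min; first exact: gen_subfield_is_subfield.
  - exact: compositum_subl.
  - by move=> y /FG; exact: compositum_subr.
- exact: compositum_subr.
- by move=> y Vy; do 2 apply: compositum_subl.
- exact: compositum_subr.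
Qed.

Lemma frob_pow_le (i j : nat) (x : K) :
  (j <= i)%N -> frob_pow p i x -> frob_pow p j x.
Proof.
move=> ji [y ->]; exists (y ^+ (p ^ (i - j))).
by rewrite -exprM -expnD subnK.
Qed.

Lemma contains_frob_le V (m n : nat) :
  (m <= n)%N -> contains_frob p V m -> contains_frob p V n.
Proof. by move=> mn Vm x /(frob_pow_le mn)/Vm. Qed.

Definition tower_of V : nat -> K -> Prop :=
  fun j => compositum V (frob_pow p j).

Lemma tower_of_stable V (m j : nat) : is_subfield V -> contains_frob p V m ->
  (m <= j)%N -> tower_of V j = V.
Proof. by move=> subV Vm mj; apply/compositum_sub_id/(contains_frob_le mj). Qed.

Lemma tower_of_power_tower V : is_subfield V -> power_tower p (tower_of V).
Proof.
split=> [i | i j ji]; first exact: gen_subfield_is_subfield.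
by rewrite /tower_of compositum_absorb // => x; apply: frob_pow_le.
Qed.

Lemma tower_of_stable_from V (m : nat) : is_subfield V ->
  contains_frob p V m -> stable_from (tower_of V) m.
Proof.
by move=> subV Vm N mN; rewrite !(tower_of_stable subV Vm).
Qed.

Lemma stable_from_tower_of_contains_frob V (m n : nat) : is_subfield V ->
  contains_frob p V n -> stable_from (tower_of V) m -> contains_frob p V m.
Proof.
move=> subV Vn stable_m x Fx.
rewrite -(tower_of_stable subV Vn (leq_maxr m n)) stable_m ?leq_maxl //.
exact: compositum_subr.
Qed.

Lemma tower_of_length V (n : nat) : is_subfield V ->
  subfield_exponent p V n -> tower_length (tower_of V) n.
Proof.
move=> subV [Vn n_min]; split; first exact: tower_of_stable_from.
by move=> m /(stable_from_tower_of_contains_frob subV Vn); apply: n_min.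
Qed.

Lemma power_tower_contains_frob W (n : nat) :
  power_tower p W -> contains_frob p (W n) n.
Proof. by case=> _ tower x Fx; rewrite (tower n n) //; exact: compositum_subr. Qed.

Lemma power_tower_eq_tower_of W (n : nat) :
  power_tower p W -> stable_from W n -> W = tower_of (W n).
Proof.
move=> towW stable_n; apply: functional_extensionality => j.
have [nj | jn] := leqP n j; last by case: towW => _ /(_ n j (ltnW jn)).
rewrite stable_n // (tower_of_stable _ _ nj) //; first by case: towW.
exact: power_tower_contains_frob.
Qed.

Lemma power_tower_exponent W (n : nat) :
  power_tower p W -> tower_length W n -> subfield_exponent p (W n) n.
Proof.
move=> towW [stable_n n_min].
have Wn : contains_frob p (W n) n by exact: power_tower_contains_frob.
split=> // m Wm; apply: n_min.
rewrite (power_tower_eq_tower_of towW stable_n).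
by apply: tower_of_stable_from => //; case: towW.
Qed.

End PowerTowerBijection.

Theorem mainTheorem9 (K : fieldType) (p : nat) (hp : p \in [pchar K])
  (hfg : fin_gen_over ((@perfect_core K p))) (n : nat) (hn : (0 < n)%N) :
  (forall W : nat -> K -> Prop, power_tower p W -> tower_length W n ->
     is_subfield (W n) /\ subfield_exponent p (W n) n) /\
  (forall V : K -> Prop, is_subfield V -> subfield_exponent p V n ->
     exists W : nat -> K -> Prop,
       [/\ power_tower p W, tower_length W n, W n = V &
           forall W' : nat -> K -> Prop, power_tower p W' -> tower_length W' n ->
             W' n = V -> W' = W]).
Proof.
split=> [W towW lenW | V subV expV].
  by split; [case: towW | exact: power_tower_exponent].
exists (tower_of p V); split.
- exact: tower_of_power_tower.
- exact: tower_of_length.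
- by apply: (tower_of_stable _ expV.1).
- by move=> W' towW' [stableW' _] <-; apply: power_tower_eq_tower_of.
Qed.
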